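(* Let $\Phi:\mathbb{R}^N\to\mathbb{R}^M$ and $L:\mathbb{R}^P\to\mathbb{R}^N$ be linear operators, let $\|\cdot\|_A$ be a norm on $\mathbb{R}^P$ with dual norm $\|\cdot\|_A^*$, and set $R(x)=\|L^*x\|_A$. Let $x_0\in\mathbb{R}^N$, and assume $\|\cdot\|_A$ is decomposable at $u_0=L^*x_0$ with associated subspace $T_0$ and vector $e_0\in T_0$; let $S_0=T_0^\perp$. Assume there exist $\eta\in\mathbb{R}^M$ and $\alpha\in\partial\|\cdot\|_A(L^*x_0)$ with $\Phi^*\eta=L\alpha$ and $\|\alpha_{S_0}\|_A^*<1$, and that $\Phi$ is injective on $\ker(L_{S_0}^* )$. Then there exist constants $C_1>0$, $C_2>0$, independent of $\eta$ and $\alpha$, such that the following holds: for every $\varepsilon>0$, every $w\in\mathbb{R}^M$ with $\|w\|_2\le\varepsilon$, $y=\Phi x_0+w$, every $c>0$ and $\lambda=c\varepsilon$, any minimizer $x^\star$ of $\min_{x\in\mathbb{R}^N}\tfrac12\|y-\Phi x\|_2^2+\lambda R(x)$ satisfies $$\|x^\star-x_0\|_2\le C\varepsilon,\qquad C=C_1\bigl(2+c\|\eta\|_2\bigr)+C_2\frac{(1+c\|\eta\|_2/2)^2}{c\,(1-\|\alpha_{S_0}\|_A^* )}.$$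
   Context: For a subspace $V\subset\mathbb{R}^P$, $P_V$ denotes the orthogonal projector onto $V$, and $L_V=LP_V$, $L_V^*=P_VL^*$, $\alpha_V=P_V\alpha$ for $\alpha\in\mathbb{R}^P$. A norm $\|\cdot\|_A$ on $\mathbb{R}^P$ is decomposable at $u\in\mathbb{R}^P$ if (i) there exist a subspace $T\subset\mathbb{R}^P$ and a vector $e\in T$ such that $\partial\|\cdot\|_A(u)=\{\alpha\in\mathbb{R}^P:\ \alpha_T=e,\ \|\alpha_{T^\perp}\|_A^*\le 1\}$, and (ii) for every $z\in T^\perp$, $\|z\|_A=\sup\{\langle v,z\rangle: v\in T^\perp,\ \|v\|_A^*\le 1\}$. *)

(* R : realType, vectors of R^n are column vectors 'cV[R]_n,
   linear operators are matrices, adjoints are transposes. *)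
From mathcomp Require Import all_boot all_order all_algebra.
From mathcomp Require Import classical_sets reals.
Set Implicit Arguments.
Unset Strict Implicit.
Unset Printing Implicit Defensive.
Import Order.TTheory GRing.Theory Num.Theory.
Local Open Scope ring_scope.
Local Open Scope classical_set_scope.

Section Defs.
Variable R : realType.

Definition dotv n (u v : 'cV[R]_n) : R := \sum_(i < n) u i 0 * v i 0.

Definition norm2 n (v : 'cV[R]_n) : R := Num.sqrt (\sum_(i < n) v i 0 ^+ 2).

Definition is_norm n (nA : 'cV[R]_n -> R) : Prop :=
  [/\ forall x, 0 <= nA x,
      forall x, nA x = 0 -> x = 0,
      forall (a : R) x, nA (a *: x) = `|a| * nA x &
      forall x y, nA (x + y) <= nA x + nA y].

Definition dual_norm n (nA : 'cV[R]_n -> R) (a : 'cV[R]_n) : R :=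
  sup [set dotv a z | z in [set z | nA z <= 1]].

Definition subdiff n (f : 'cV[R]_n -> R) (u : 'cV[R]_n) : set 'cV[R]_n :=
  [set g | forall z, f u + dotv g (z - u) <= f z].

(* Pm is the orthogonal projector onto the subspace V = range Pm
   (V = {x | Pm x = x}, V^perp = {x | Pm x = 0}, P_{V^perp} = 1 - Pm). *)
Definition orth_projector n (Pm : 'M[R]_n) : Prop :=
  Pm *m Pm = Pm /\ Pm^T = Pm.

Definition decomposable_at n (nA : 'cV[R]_n -> R) (u : 'cV[R]_n)
    (PT : 'M[R]_n) (e : 'cV[R]_n) : Prop :=
  [/\ orth_projector PT,
      PT *m e = e,
      subdiff nA u =
        [set g | PT *m g = e /\ dual_norm nA ((1%:M - PT) *m g) <= 1] &
      forall z, PT *m z = 0 ->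
        nA z = sup [set dotv v z | v in
                      [set v | PT *m v = 0 /\ dual_norm nA v <= 1]]].

End Defs.

(* Write h = xs - x0 and S = 1 - P_T0, and fix k > 0 with |.|_A >= k |.|_2.
   Comparing the objective at xs and at x0 gives
   |Phi h|^2/2 + lambda (R(xs) - R(x0)) <= <Phi h, w>.  Since |alpha_S|^* < 1,
   decomposability leaves room to add (1 - |alpha_S|^* ) q to the certificate
   alpha, where q is the multiple of (L^* h)_S of Euclidean norm k, which lies in
   the dual unit ball; the result is still a subgradient at L^* x0.  Hence
   R(xs) - R(x0) >= <eta, Phi h> + (1 - |alpha_S|^* ) k |(L^* h)_S|_2, and the
   comparison becomes a quadratic inequality bounding both |Phi h|_2 and
   |(L^* h)_S|_2 by multiples of eps.  Injectivity of Phi on ker L_S^* makes the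
   sum of these two quantities a norm on R^N, which dominates a multiple of the
   Euclidean norm like every norm on R^N. *)
From mathcomp Require Import all_boot all_order all_algebra.
From mathcomp Require Import all_classical all_reals all_analysis.
From mathcomp Require Import ring lra.
Import Order.TTheory GRing.Theory Num.Theory.
Import numFieldTopology.Exports.
Local Open Scope ring_scope.
Local Open Scope classical_set_scope.
Set Implicit Arguments.
Unset Strict Implicit.
Unset Printing Implicit Defensive.

Section Euclidean.
Variable R : realType.
Implicit Types (n : nat).

Lemma dotvE n (u v : 'cV[R]_n) : dotv u v = (u^T *m v) 0 0.
Proof. by rewrite /dotv mxE; apply: eq_bigr => i _; rewrite mxE. Qed.

Lemma dotvC n (u v : 'cV[R]_n) : dotv u v = dotv v u.
Proof. by rewrite /dotv; apply: eq_bigr => i _; rewrite mulrC. Qed.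

Lemma dotvDl n (u v w : 'cV[R]_n) : dotv (u + v) w = dotv u w + dotv v w.
Proof. by rewrite /dotv -big_split; apply: eq_bigr => i _; rewrite mxE mulrDl. Qed.

Lemma dotvZl n a (u w : 'cV[R]_n) : dotv (a *: u) w = a * dotv u w.
Proof. by rewrite /dotv mulr_sumr; apply: eq_bigr => i _; rewrite mxE mulrA. Qed.

Lemma dotvNl n (u w : 'cV[R]_n) : dotv (- u) w = - dotv u w.
Proof. by rewrite -scaleN1r dotvZl mulN1r. Qed.

Lemma dotvBl n (u v w : 'cV[R]_n) : dotv (u - v) w = dotv u w - dotv v w.
Proof. by rewrite dotvDl dotvNl. Qed.

Lemma dotvDr n (u v w : 'cV[R]_n) : dotv w (u + v) = dotv w u + dotv w v.
Proof. by rewrite !(dotvC w) dotvDl. Qed.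

Lemma dotvBr n (u v w : 'cV[R]_n) : dotv w (u - v) = dotv w u - dotv w v.
Proof. by rewrite !(dotvC w) dotvBl. Qed.

Lemma dotvZr n a (u w : 'cV[R]_n) : dotv w (a *: u) = a * dotv w u.
Proof. by rewrite !(dotvC w) dotvZl. Qed.

Lemma dotv0l n (u : 'cV[R]_n) : dotv 0 u = 0.
Proof. by rewrite -(scale0r 0) dotvZl mul0r. Qed.

Lemma dotv_mulmxl m n (A : 'M[R]_(m, n)) u v : dotv (A *m u) v = dotv u (A^T *m v).
Proof. by rewrite !dotvE trmx_mul mulmxA. Qed.

Lemma dotvv_ge0 n (v : 'cV[R]_n) : 0 <= dotv v v.
Proof. by apply: sumr_ge0 => i _; rewrite -expr2 sqr_ge0. Qed.

Lemma norm2_ge0 n (v : 'cV[R]_n) : 0 <= norm2 v.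
Proof. exact: sqrtr_ge0. Qed.

Lemma norm2_sqr n (v : 'cV[R]_n) : norm2 v ^+ 2 = dotv v v.
Proof.
rewrite /norm2 sqr_sqrtr; last by apply: sumr_ge0 => i _; rewrite sqr_ge0.
by apply: eq_bigr => i _; rewrite expr2.
Qed.

Lemma norm2_eq0 n (v : 'cV[R]_n) : norm2 v = 0 -> v = 0.
Proof.
move=> /eqP; rewrite /norm2 sqrtr_eq0 => sum_le0.
have sum_eq0 : \sum_(i < n) v i 0 ^+ 2 = 0.
  by apply/eqP; rewrite eq_le sum_le0 sumr_ge0 // => i _; rewrite sqr_ge0.
have vi0 := psumr_eq0P (fun i _ => sqr_ge0 (v i 0)) sum_eq0.
apply/matrixP => i j; rewrite (ord1 j) mxE; apply/eqP.
by rewrite -sqrf_eq0 vi0.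
Qed.

Lemma norm2Z n a (v : 'cV[R]_n) : norm2 (a *: v) = `|a| * norm2 v.
Proof.
rewrite /norm2 -sqrtr_sqr -sqrtrM ?sqr_ge0 // mulr_sumr.
by congr Num.sqrt; apply: eq_bigr => i _; rewrite mxE exprMn.
Qed.

Lemma norm2N n (v : 'cV[R]_n) : norm2 (- v) = norm2 v.
Proof. by rewrite -scaleN1r norm2Z normrN normr1 mul1r. Qed.

Lemma norm2_0 n : norm2 (0 : 'cV[R]_n) = 0.
Proof. by rewrite -(scale0r 0) norm2Z normr0 mul0r. Qed.

Lemma norm2_sqrD n (u v : 'cV[R]_n) :
  norm2 (u + v) ^+ 2 = norm2 u ^+ 2 + 2 * dotv u v + norm2 v ^+ 2.
Proof. by rewrite !norm2_sqr !dotvDl !dotvDr (dotvC v u); ring. Qed.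

Lemma cauchy_schwarz n (u v : 'cV[R]_n) : dotv u v <= norm2 u * norm2 v.
Proof.
have [u0|/negPf un0] := eqVneq (norm2 u) 0.
  by rewrite (norm2_eq0 u0) dotv0l norm2_0 mul0r.
have [v0|/negPf vn0] := eqVneq (norm2 v) 0.
  by rewrite (norm2_eq0 v0) dotvC dotv0l norm2_0 mulr0.
have u_gt0 : 0 < norm2 u by rewrite lt_def un0 norm2_ge0.
have v_gt0 : 0 < norm2 v by rewrite lt_def vn0 norm2_ge0.
have := dotvv_ge0 (norm2 v *: u - norm2 u *: v).
rewrite !dotvBl !dotvBr !dotvZl !dotvZr -!norm2_sqr (dotvC v u).
set p := norm2 u; set r := norm2 v; set d := dotv u v => sq_ge0.
have : 0 <= 2 * p * r * (p * r - d) by nra.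
by rewrite pmulr_rge0 ?subr_ge0 // !mulr_gt0.
Qed.

Lemma norm2D n (u v : 'cV[R]_n) : norm2 (u + v) <= norm2 u + norm2 v.
Proof.
have := norm2_sqrD u v; have := cauchy_schwarz u v.
have := norm2_ge0 (u + v); have := norm2_ge0 u; have := norm2_ge0 v.
nra.
Qed.

Lemma dotv_orth_projector n (Pm : 'M[R]_n) u :
  orth_projector Pm -> dotv (Pm *m u) u = norm2 (Pm *m u) ^+ 2.
Proof.
case=> PP PT; rewrite norm2_sqr [RHS]dotv_mulmxl PT mulmxA PP.
exact: dotvC.
Qed.

Lemma orth_projectorC n (Pm : 'M[R]_n) :
  orth_projector Pm -> orth_projector (1%:M - Pm).
Proof.
case=> PP PT; split; last by rewrite linearB /= trmx1 PT.
by rewrite mulmxBl mul1mx mulmxBr mulmx1 PP subrr subr0.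
Qed.

Lemma orth_projector_mulC n (Pm : 'M[R]_n) :
  orth_projector Pm -> Pm *m (1%:M - Pm) = 0.
Proof. by case=> PP _; rewrite mulmxBr mulmx1 PP subrr. Qed.

End Euclidean.

Lemma entry_le_mx_norm (R : realType) m n (x : 'M[R]_(m, n)) i j :
  `|x i j| <= `|x|.
Proof.
by rewrite [leRHS]/Num.norm /= mx_normrE; apply/bigmax_geP; right; exists (i, j).
Qed.

Lemma compact_unit_sphere (R : realType) n :
  compact [set x : 'rV[R]_n | `|x| = 1].
Proof.
apply: bounded_closed_compact; first by exists 1; split => // M M1 x /= ->; lra.
have : closed ((fun x : 'rV[R]_n => `|x|) @^-1` [set 1]).
  apply: preimage_closed; last exact: closed_eq.
  by move=> ? _; exact: norm_continuous.
by [].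
Qed.

(* The library proves Heine-Borel only for row vectors, so norm equivalence is
   established on 'rV_n and transported to columns by transposition. *)
Section RowNormEquivalence.
Variables (R : realType) (n : nat) (f : 'rV[R]_n -> R).
Hypothesis f_ge0 : forall x, 0 <= f x.
Hypothesis f_eq0 : forall x, f x = 0 -> x = 0.
Hypothesis fZ : forall (a : R) x, f (a *: x) = `|a| * f x.
Hypothesis fD : forall x y, f (x + y) <= f x + f y.

Lemma rV_norm_sum_le (I : Type) (r : seq I) (F : I -> 'rV[R]_n) :
  f (\sum_(i <- r) F i) <= \sum_(i <- r) f (F i).
Proof.
elim: r => [|a r IH]; first by rewrite !big_nil -(scale0r 0) fZ normr0 mul0r.
by rewrite !big_cons; apply: le_trans (fD _ _) _; exact: lerD.
Qed.

Lemma rV_norm_le_mx_norm : exists B, 0 <= B /\ forall x, f x <= B * `|x|.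
Proof.
exists (\sum_(i < n) f (delta_mx 0 i)); split; first exact: sumr_ge0.
move=> x; rewrite {1}(row_sum_delta x) mulr_suml.
apply: le_trans (rV_norm_sum_le _ _) _; apply: ler_sum => i _.
by rewrite fZ mulrC ler_wpM2l // entry_le_mx_norm.
Qed.

Lemma rV_norm_dist x y : `|f x - f y| <= f (x - y).
Proof.
have fN z : f (- z) = f z by rewrite -scaleN1r fZ normrN normr1 mul1r.
have := fD (x - y) y; have := fD x (y - x).
rewrite subrK addrC subrK -opprB fN => h1 h2.
by rewrite ler_norml; apply/andP; split; lra.
Qed.

Lemma rV_norm_continuous : continuous f.
Proof.
have [B [B_ge0 fB]] := rV_norm_le_mx_norm.
move=> x; apply: (proj2 (@cvgrPdist_lt _ R^o _ (nbhs x) _ f (f x))) => e e_gt0.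
have eB_gt0 : 0 < e / (B + 1) by apply: divr_gt0 => //; lra.
near=> y.
apply: le_lt_trans (rV_norm_dist _ _) _; apply: le_lt_trans (fB _) _.
have : `|x - y| < e / (B + 1).
  by near: y; exact: (@cvgr_dist_lt _ _ _ (nbhs x) _ id x (@cvg_id _ _) _ eB_gt0).
rewrite ltr_pdivlMr; last lra.
by apply: le_lt_trans; rewrite mulrC ler_wpM2l //; lra.
Unshelve. all: by end_near.
Qed.

Lemma mx_norm_le_rV_norm : exists k, 0 < k /\ forall x, k * `|x| <= f x.
Proof.
have [[x0 x0_neq0]|all0] := pselect (exists x : 'rV[R]_n, x != 0); last first.
  exists 1; split => // x; have [->|x_neq0] := eqVneq x 0.
    by rewrite normr0 mulr0 f_ge0.
  by exfalso; apply: all0; exists x.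
have normalize (x : 'rV[R]_n) : x != 0 -> `| `|x|^-1 *: x| = 1.
  by move=> xn0; rewrite normrZ ger0_norm ?invr_ge0 // mulVf // normr_eq0.
have sphere_n0 : [set x : 'rV[R]_n | `|x| = 1] !=set0.
  by exists (`|x0|^-1 *: x0); exact: normalize.
have [c c_sphere cmin] := compact_EVT_min sphere_n0 (@compact_unit_sphere R n)
  (continuous_subspaceT rV_norm_continuous).
have c1 : `|c| = 1 by move: c_sphere; rewrite inE.
exists (f c); split.
  rewrite lt_def f_ge0 andbT; apply/negP => /eqP /f_eq0 c0.
  by move: c1; rewrite c0 normr0 => /eqP; rewrite eq_sym oner_eq0.
move=> x; have [->|x_neq0] := eqVneq x 0; first by rewrite normr0 mulr0 f_ge0.
have -> : f x = `|x| * f (`|x|^-1 *: x).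
  by rewrite fZ ger0_norm ?invr_ge0 // mulrA mulfV ?mul1r // normr_eq0.
by rewrite mulrC ler_wpM2l //; apply: cmin; rewrite inE; exact: normalize.
Qed.

End RowNormEquivalence.

Lemma norm2_le_mx_norm (R : realType) n (z : 'cV[R]_n) :
  norm2 z <= Num.sqrt n%:R * `|z^T|.
Proof.
rewrite /norm2 -(ger0_norm (normr_ge0 z^T)) -sqrtr_sqr -sqrtrM ?ler0n //.
rewrite ler_sqrt ?mulr_ge0 ?ler0n ?sqr_ge0 //.
rewrite (_ : n%:R * _ = \sum_(i < n) `|z^T| ^+ 2); last first.
  by rewrite sumr_const card_ord mulr_natl.
apply: ler_sum => i _.
have zi_le : `|z i 0| <= `|z^T| by have := entry_le_mx_norm z^T 0 i; rewrite mxE.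
rewrite -(real_normK (num_real (z i 0))).
by have := normr_ge0 (z i 0); nra.
Qed.

Section NormsAndDualNorms.
Variables (R : realType) (n : nat) (nA : 'cV[R]_n -> R).
Hypothesis nA_norm : is_norm nA.

Lemma is_norm_ge_norm2 : exists k, 0 < k /\ forall z, k * norm2 z <= nA z.
Proof.
case: nA_norm => nA_ge0 nA_eq0 nAZ nAD.
have [k [k_gt0 kf]] : exists k, 0 < k /\ forall x : 'rV_n, k * `|x| <= nA x^T.
  apply: mx_norm_le_rV_norm => [x|x /nA_eq0 x0|a x|x y]; rewrite ?linearZ ?linearD //=.
  by rewrite -(trmxK x) x0 linear0.
have sqrt_ge0 : 0 <= Num.sqrt (n%:R : R) by exact: sqrtr_ge0.
have sqrt1_gt0 : 0 < Num.sqrt (n%:R : R) + 1 by lra.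
exists (k / (Num.sqrt n%:R + 1)); split; first exact: divr_gt0.
move=> z; have := kf z^T; rewrite trmxK; apply: le_trans.
rewrite mulrAC ler_pdivrMr // -mulrA ler_wpM2l ?(ltW k_gt0) //.
apply: le_trans (norm2_le_mx_norm z) _.
by rewrite mulrC ler_wpM2l ?normr_ge0 // lerDl.
Qed.

Lemma is_norm0 : nA 0 = 0.
Proof. by case: nA_norm => _ _ nAZ _; rewrite -(scale0r 0) nAZ normr0 mul0r. Qed.

Lemma dotv_le_norm2_div k a z : 0 < k -> (forall z, k * norm2 z <= nA z) ->
  nA z <= 1 -> dotv a z <= norm2 a / k.
Proof.
move=> k_gt0 kz z_le1; apply: le_trans (cauchy_schwarz _ _) _.
rewrite ler_pdivlMr // -mulrA ler_piMr ?norm2_ge0 //.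
by apply: le_trans z_le1; rewrite mulrC.
Qed.

Lemma dual_norm_ub a z : nA z <= 1 -> dotv a z <= dual_norm nA a.
Proof.
move=> z_le1; have [k [k_gt0 kz]] := is_norm_ge_norm2.
apply: ub_le_sup; last by exists z.
by exists (norm2 a / k) => _ [z' /= z'_le1 <-]; exact: dotv_le_norm2_div.
Qed.

Lemma dual_norm_le a B :
  (forall z, nA z <= 1 -> dotv a z <= B) -> dual_norm nA a <= B.
Proof.
move=> aB; apply: ge_sup; first by exists (dotv a 0), 0 => //=; rewrite is_norm0.
by move=> _ [z /= z_le1 <-]; exact: aB.
Qed.

Lemma dual_normDZ a b t :
  0 <= t -> dual_norm nA (a + t *: b) <= dual_norm nA a + t * dual_norm nA b.
Proof.
move=> t_ge0; apply: dual_norm_le => z z_le1; rewrite dotvDl dotvZl.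
by rewrite lerD ?ler_wpM2l ?dual_norm_ub.
Qed.

Lemma dual_norm_le_norm2 k a :
  0 < k -> (forall z, k * norm2 z <= nA z) -> dual_norm nA a <= norm2 a / k.
Proof.
by move=> k_gt0 kz; apply: dual_norm_le => z; exact: dotv_le_norm2_div.
Qed.

End NormsAndDualNorms.

(* For [v = 0] the scalar is [k / 0 = 0], and both claims still hold. *)
Lemma norming_vector (R : realType) n (nA : 'cV[R]_n -> R) k v :
  is_norm nA -> 0 < k -> (forall z, k * norm2 z <= nA z) ->
  dual_norm nA ((k / norm2 v) *: v) <= 1 /\
  dotv ((k / norm2 v) *: v) v = k * norm2 v.
Proof.
move=> nA_norm k_gt0 kz; rewrite dotvZl -norm2_sqr.
have [v0|vn0] := eqVneq (norm2 v) 0.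
  rewrite v0 invr0 mulr0 scale0r expr0n /= !mulr0; split => //.
  by apply: le_trans (dual_norm_le_norm2 nA_norm _ k_gt0 kz) _; rewrite norm2_0 mul0r.
split; last by rewrite expr2 mulrA mulfVK.
apply: le_trans (dual_norm_le_norm2 nA_norm _ k_gt0 kz) _.
rewrite norm2Z ger0_norm ?divr_ge0 ?norm2_ge0 ?(ltW k_gt0) // mulfVK //.
by rewrite divff ?gt_eqF.
Qed.

Lemma is_norm_injective_sum (R : realType) K M N
    (A : 'M[R]_(K, N)) (B : 'M[R]_(M, N)) :
  (forall x : 'cV_N, A *m x = 0 -> B *m x = 0 -> x = 0) ->
  is_norm (fun x : 'cV[R]_N => norm2 (B *m x) + norm2 (A *m x)).
Proof.
move=> AB_inj; split.
- by move=> x; rewrite addr_ge0 ?norm2_ge0.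
- move=> x sum0; have := norm2_ge0 (B *m x); have := norm2_ge0 (A *m x).
  by move=> ? ?; apply: AB_inj; apply: norm2_eq0; lra.
- by move=> a x; rewrite -!scalemxAr !norm2Z mulrDr.
- move=> x x'; rewrite !mulmxDr.
  by have := norm2D (B *m x) (B *m x'); have := norm2D (A *m x) (A *m x'); lra.
Qed.

Lemma decomposable_subdiff_perturb (R : realType) n (nA : 'cV[R]_n -> R)
    u PT e alpha q :
  is_norm nA -> decomposable_at nA u PT e -> subdiff nA u alpha ->
  PT *m q = 0 -> dual_norm nA q <= 1 ->
  subdiff nA u (alpha + (1 - dual_norm nA ((1%:M - PT) *m alpha)) *: q).
Proof.
move=> nA_norm [_ _ subdiffE _] alpha_sub PTq q_le1.
move: alpha_sub; rewrite subdiffE => -[PTalpha alpha_le1]; split.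
  by rewrite mulmxDr PTalpha -scalemxAr PTq scaler0 addr0.
have Sq : (1%:M - PT) *m q = q by rewrite mulmxBl mul1mx PTq subr0.
rewrite mulmxDr -scalemxAr Sq.
have t_ge0 : 0 <= 1 - dual_norm nA ((1%:M - PT) *m alpha) by rewrite subr_ge0.
apply: le_trans (dual_normDZ nA_norm _ _ t_ge0) _.
by have := ler_wpM2l t_ge0 q_le1; lra.
Qed.

Lemma lasso_basic_ineq (R : realType) M N (Phi : 'M[R]_(M, N))
    (reg : 'cV[R]_N -> R) (lam : R) x0 w xs :
  2^-1 * norm2 (Phi *m x0 + w - Phi *m xs) ^+ 2 + lam * reg xs
    <= 2^-1 * norm2 (Phi *m x0 + w - Phi *m x0) ^+ 2 + lam * reg x0 ->
  norm2 (Phi *m (xs - x0)) ^+ 2 / 2 + lam * (reg xs - reg x0)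
    <= dotv (Phi *m (xs - x0)) w.
Proof.
have -> : Phi *m x0 + w - Phi *m xs = w + - (Phi *m (xs - x0)).
  by rewrite mulmxBr opprB addrA (addrC w).
rewrite addrAC subrr add0r norm2_sqrD norm2N dotvC dotvNl; lra.
Qed.

Section LassoError.
Variables (R : realType) (N M P : nat) (Phi : 'M[R]_(M, N)) (L : 'M[R]_(N, P)).
Variables (nA : 'cV[R]_P -> R) (x0 : 'cV[R]_N) (PT : 'M[R]_P) (e : 'cV[R]_P).
Hypothesis nA_norm : is_norm nA.
Hypothesis nA_dec : decomposable_at nA (L^T *m x0) PT e.

Lemma lasso_error_ineq k eta alpha lam eps w xs :
  0 < k -> (forall z, k * norm2 z <= nA z) ->
  subdiff nA (L^T *m x0) alpha -> Phi^T *m eta = L *m alpha ->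
  0 <= lam -> norm2 w <= eps ->
  2^-1 * norm2 (Phi *m x0 + w - Phi *m xs) ^+ 2 + lam * nA (L^T *m xs)
    <= 2^-1 * norm2 (Phi *m x0 + w - Phi *m x0) ^+ 2 + lam * nA (L^T *m x0) ->
  norm2 (Phi *m (xs - x0)) ^+ 2 / 2
    + lam * ((1 - dual_norm nA ((1%:M - PT) *m alpha))
             * (k * norm2 ((1%:M - PT) *m L^T *m (xs - x0))))
  <= (eps + lam * norm2 eta) * norm2 (Phi *m (xs - x0)).
Proof.
move=> k_gt0 kz alpha_sub eta_alpha lam_ge0 w_le.
move=> /(@lasso_basic_ineq _ _ _ Phi (fun x => nA (L^T *m x))) /=.
set h := xs - x0; set v := (1%:M - PT) *m L^T *m h.
have [PT_proj _ _ _] := nA_dec.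
have [q_le1 qv] := norming_vector v nA_norm k_gt0 kz.
set q := (k / norm2 v) *: v in q_le1 qv *.
have PTq : PT *m q = 0.
  by rewrite /q /v -scalemxAr !mulmxA orth_projector_mulC // !mul0mx scaler0.
have := decomposable_subdiff_perturb nA_norm nA_dec alpha_sub PTq q_le1 (L^T *m xs).
rewrite -mulmxBr -/h dotvDl dotvZl.
have -> : dotv alpha (L^T *m h) = dotv eta (Phi *m h).
  by rewrite -dotv_mulmxl -eta_alpha dotv_mulmxl trmxK.
have -> : dotv q (L^T *m h) = k * norm2 v.
  rewrite -qv /q !dotvZl /v -mulmxA (dotv_orth_projector _ (orth_projectorC PT_proj)).
  by rewrite norm2_sqr mulmxA.
have := cauchy_schwarz (Phi *m h) w; have := cauchy_schwarz (- eta) (Phi *m h).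
rewrite dotvNl norm2N.
have := norm2_ge0 (Phi *m h); have := norm2_ge0 eta.
set a := norm2 (Phi *m h); set E := dotv eta (Phi *m h).
set t := 1 - dual_norm _ _; set s := k * norm2 v.
move=> eta_ge0 a_ge0 Ea wa hsub basic.
have := ler_wpM2l lam_ge0 hsub; nra.
Qed.

End LassoError.

Lemma quadratic_bound (R : realType) (a b X : R) :
  0 <= a -> 0 <= b -> 0 <= X -> a ^+ 2 / 2 + X <= b * a ->
  a <= 2 * b /\ X <= b ^+ 2 / 2.
Proof. by move=> a_ge0 b_ge0 X_ge0 abX; have := sqr_ge0 (a - b); split; nra. Qed.

Lemma stability_constants (R : realType) (kA kB c eps t Ne a s nh : R) :
  0 < kA -> 0 < kB -> 0 < c -> 0 < eps -> 0 < t -> 0 <= Ne -> 0 <= a -> 0 <= s ->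
  a ^+ 2 / 2 + c * eps * (t * (kA * s)) <= (eps + c * eps * Ne) * a ->
  kB * nh <= a + s ->
  nh <= (2 / kB * (2 + c * Ne)
         + 2 / (kA * kB) * (1 + c * Ne / 2) ^+ 2 / (c * t)) * eps.
Proof.
move=> kA_gt0 kB_gt0 c_gt0 eps_gt0 t_gt0 Ne_ge0 a_ge0 s_ge0 quad nh_le.
have cNe_ge0 : 0 <= c * Ne by rewrite mulr_ge0 // ltW.
set b := eps * (1 + c * Ne).
have b_ge0 : 0 <= b by rewrite mulr_ge0 ?ltW //; lra.
have Z_gt0 : 0 < c * eps * t * kA by rewrite !mulr_gt0.
have [a_le s_le] : a <= 2 * b /\ c * eps * t * kA * s <= b ^+ 2 / 2.
  apply: quadratic_bound => //; first by rewrite mulr_ge0 // ltW.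
  by rewrite /b; lra.
have s_le' : s <= b ^+ 2 / (2 * (c * eps * t * kA)).
  by rewrite ler_pdivlMr ?mulr_gt0 //; lra.
have -> : (2 / kB * (2 + c * Ne)
           + 2 / (kA * kB) * (1 + c * Ne / 2) ^+ 2 / (c * t)) * eps
          = (2 * eps * (2 + c * Ne)
             + eps ^+ 2 * (2 + c * Ne) ^+ 2 / (2 * (c * eps * t * kA))) / kB.
  by field; rewrite !gt_eqF.
rewrite ler_pdivlMr // mulrC; apply: le_trans nh_le _.
have b_sqr_le : b ^+ 2 / (2 * (c * eps * t * kA))
                <= eps ^+ 2 * (2 + c * Ne) ^+ 2 / (2 * (c * eps * t * kA)).
  rewrite ler_pM2r ?invr_gt0 ?mulr_gt0 // /b exprMn ler_wpM2l ?sqr_ge0 //.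
  by rewrite ler_sqr ?nnegrE; lra.
by rewrite /b in a_le; lra.
Qed.

Theorem theorem2 (R : realType) (N M P : nat)
    (Phi : 'M[R]_(M, N)) (L : 'M[R]_(N, P))
    (nA : 'cV[R]_P -> R) (x0 : 'cV[R]_N)
    (PT0 : 'M[R]_P) (e0 : 'cV[R]_P) :
  is_norm nA ->
  decomposable_at nA (L^T *m x0) PT0 e0 ->
  (exists (eta : 'cV[R]_M) (alpha : 'cV[R]_P),
      alpha \in subdiff nA (L^T *m x0) /\
      Phi^T *m eta = L *m alpha /\
      dual_norm nA ((1%:M - PT0) *m alpha) < 1) ->
  (forall x1 x2 : 'cV[R]_N,
      (1%:M - PT0) *m L^T *m x1 = 0 ->
      (1%:M - PT0) *m L^T *m x2 = 0 ->
      Phi *m x1 = Phi *m x2 -> x1 = x2) ->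
  exists C1 C2 : R, 0 < C1 /\ 0 < C2 /\
    forall (eta : 'cV[R]_M) (alpha : 'cV[R]_P),
      alpha \in subdiff nA (L^T *m x0) ->
      Phi^T *m eta = L *m alpha ->
      dual_norm nA ((1%:M - PT0) *m alpha) < 1 ->
      forall (eps : R) (w : 'cV[R]_M) (c : R) (xs : 'cV[R]_N),
        0 < eps -> norm2 w <= eps -> 0 < c ->
        let y := Phi *m x0 + w in
        let lambda := c * eps in
        (forall x : 'cV[R]_N,
            2^-1 * norm2 (y - Phi *m xs) ^+ 2 + lambda * nA (L^T *m xs)
            <= 2^-1 * norm2 (y - Phi *m x) ^+ 2 + lambda * nA (L^T *m x)) ->
        norm2 (xs - x0) <=
          (C1 * (2 + c * norm2 eta)
           + C2 * (1 + c * norm2 eta / 2) ^+ 2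
                  / (c * (1 - dual_norm nA ((1%:M - PT0) *m alpha)))) * eps.
Proof.
move=> nA_norm nA_dec _ Phi_inj.
have [kA [kA_gt0 kA_le]] := is_norm_ge_norm2 nA_norm.
have nB_norm : is_norm (fun x : 'cV[R]_N =>
    norm2 (Phi *m x) + norm2 ((1%:M - PT0) *m L^T *m x)).
  by apply: is_norm_injective_sum => x Sx0 Phix0; apply: Phi_inj; rewrite ?mulmx0.
have [kB [kB_gt0 kB_le]] := is_norm_ge_norm2 nB_norm.
exists (2 / kB), (2 / (kA * kB)); split; first by rewrite divr_gt0.
split; first by rewrite divr_gt0 ?mulr_gt0.
move=> eta alpha /[!inE] alpha_sub eta_alpha dual_lt1 eps w c xs eps_gt0 w_le c_gt0.
move=> /= /(_ x0) xs_min.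
apply: (stability_constants kA_gt0 kB_gt0 c_gt0 eps_gt0 _ (norm2_ge0 _)
         (norm2_ge0 _) (norm2_ge0 _) _ (kB_le (xs - x0))).
  by rewrite subr_gt0.
apply: (lasso_error_ineq nA_norm nA_dec kA_gt0 kA_le alpha_sub eta_alpha _ w_le xs_min).
by rewrite mulr_ge0 // ltW.
Qed.
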